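(* Let $G$ be an infinite separable Hausdorff topological group. Then $G$ is not dense-subgroup-pseudocompact, i.e., there exists a dense subgroup of $G$ that is not pseudocompact.
   Context: A space is pseudocompact if every continuous real-valued function on it is bounded. A topological group $G$ is dense-subgroup-pseudocompact if every dense subgroup of $G$ (with the subspace topology) is pseudocompact. *)

From HB Require Import structures.
From mathcomp Require Import all_boot all_order all_algebra.
From mathcomp Require Import all_classical all_reals all_analysis.
Set Implicit Arguments. Unset Strict Implicit. Unset Printing Implicit Defensive.
Import Order.TTheory GRing.Theory Num.Theory numFieldNormedType.Exports.
Local Open Scope classical_set_scope.
Local Open Scope ring_scope.

Definition is_topological_group (T : topologicalType)
  (mul : T -> T -> T) (inv : T -> T) (e : T) : Prop :=
  [/\ (forall x y z, mul x (mul y z) = mul (mul x y) z),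
      (forall x, mul e x = x /\ mul x e = x),
      (forall x, mul (inv x) x = e /\ mul x (inv x) = e),
      continuous (fun p : T * T => mul p.1 p.2) &
      continuous inv].

Definition is_subgroup (T : Type) (mul : T -> T -> T) (inv : T -> T) (e : T)
  (H : set T) : Prop :=
  [/\ H e, (forall x y, H x -> H y -> H (mul x y)) & (forall x, H x -> H (inv x))].

Definition separable_space (T : topologicalType) : Prop :=
  exists D : set T, countable D /\ dense D.

(* Continuous functions on the
   subspace A are exactly the restrictions to A of maps f : T -> R with
   {within A, continuous f}. *)
Definition pseudocompact_subspace (R : realType) (T : topologicalType) (A : set T)
  : Prop :=
  forall f : T -> R, {within A, continuous f} ->
    exists M : R, forall x, A x -> `|f x| <= M.

Definition dense_subgroup_pseudocompact (R : realType) (T : topologicalType)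
  (mul : T -> T -> T) (inv : T -> T) (e : T) : Prop :=
  forall H : set T, is_subgroup mul inv e H -> dense H ->
    pseudocompact_subspace R H.

From HB Require Import structures.
From mathcomp Require Import all_boot all_order all_algebra.
From mathcomp Require Import all_classical all_reals all_analysis.
Import Order.TTheory GRing.Theory Num.Theory numFieldNormedType.Exports.
Local Open Scope classical_set_scope.
Local Open Scope ring_scope.

(* Take a countable dense set D; the subgroup it generates is countable
   (enumerated by words in D), dense, and infinite (a finite dense subset of a
   Hausdorff space is the whole space).  It remains to see that an infinite
   countable subgroup H is never pseudocompact.  Two facts about G are used:
   it is functionally Hausdorff (its left uniformity makes it completely
   regular), and H is homogeneous (translations are homeomorphisms), so either
   every point of H is isolated in H or none is.  In both cases we build a
   decreasing sequence K_n of relatively clopen subsets of H, each meeting H,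
   with the n-th point of H outside K_(n+1); the "depth" of a point (the number
   of K_n containing it) is then a locally constant, hence continuous,
   unbounded function on H.  When H is discrete the K_n are obtained by
   removing points; when H has no isolated points, by cutting along a level of
   a separating function g at a level r not in the countable set g(H). *)

Definition isolated_in {T : topologicalType} (H : set T) (x : T) : Prop :=
  exists2 N, nbhs x N & forall z, N z -> H z -> z = x.

Definition functionally_hausdorff (R : realType) (T : topologicalType) : Prop :=
  forall a y : T, a <> y -> exists g : T -> R, [/\ continuous g, g y = 0 & g a = 1].

Definition rel_open {T : topologicalType} (H K : set T) : Prop :=
  forall x, H x -> K x -> exists2 N, nbhs x N & forall z, N z -> H z -> K z.

Definition rel_clopen {T : topologicalType} (H K : set T) : Prop :=
  rel_open H K /\ rel_open H (~` K).

(* The unit interval is uncountable: a countable set of reals (being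
   Lebesgue-negligible) misses some point of ]0, 1[. *)
Lemma countable_avoid_unit_interval {R : realType} {S : set R} :
  countable S -> exists r : R, [/\ 0 < r, r < 1 & ~ S r].
Proof.
move=> S_countable; apply: contrapT => no_r.
have itv_S : `]0%R, 1%R[ `<=` S.
  move=> r; rewrite /= in_itv /= => /andP[r0 r1].
  by apply: contrapT => nSr; apply: no_r; exists r.
have := countable_lebesgue_measure0 (sub_countable (subset_card_le itv_S) S_countable).
rewrite lebesgue_measure_itv /= lte_fin ltr01 => /eqP.
by rewrite -EFinD eqe subr0 oner_eq0.
Qed.

Section RelativelyClopen.
Context {R : realType} {T : topologicalType} {H : set T}.

Lemma rel_clopenT : rel_clopen H setT.
Proof.
split=> x _ Kx; first by exists setT => //; exact: filterT.
by exfalso; apply: Kx.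
Qed.

Lemma rel_clopenI {A B : set T} : rel_clopen H A -> rel_clopen H B -> rel_clopen H (A `&` B).
Proof.
move=> [A_open A'_open] [B_open B'_open]; split.
  move=> x Hx [Ax Bx]; have [N nN N_A] := A_open x Hx Ax; have [M nM M_B] := B_open x Hx Bx.
  by exists (N `&` M); [exact: filterI | move=> z [Nz Mz] Hz; split; [exact: N_A|exact: M_B]].
move=> x Hx /not_andP[nAx|nBx].
  by have [N nN N_A'] := A'_open x Hx nAx; exists N => // z Nz Hz [/(N_A' z Nz Hz)].
by have [N nN N_B'] := B'_open x Hx nBx; exists N => // z Nz Hz [_ /(N_B' z Nz Hz)].
Qed.

Lemma rel_clopen_level {g : T -> R} {r : R} :
  continuous g -> ~ (g @` H) r -> rel_clopen H [set z | r < g z].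
Proof.
move=> g_cont r_notin.
have g_nbhs x (U : set R) : open U -> U (g x) -> nbhs x [set z | U (g z)].
  by move=> U_open Ugx; have := g_cont x U; apply; apply: open_nbhs_nbhs; split.
split=> x Hx /= gx.
  by exists [set z | r < g z] => //; apply: (g_nbhs x [set t | r < t]) => //; exact: open_gt.
have gxr : g x < r.
  rewrite lt_neqAle leNgt; apply/andP; split; last exact/negP.
  by apply/eqP => gxr; apply: r_notin; exists x.
exists [set z | g z < r]; first by apply: (g_nbhs x [set t | t < r]) => //; exact: open_lt.
by move=> z /= gzr _ rgz; have := lt_trans gzr rgz; rewrite ltxx.
Qed.

Lemma locally_constant_continuous (f : T -> R) :
  (forall x, H x -> exists2 N, nbhs x N & forall z, N z -> H z -> f z = f x) ->
  {within H, continuous f}.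
Proof.
move=> f_lc; apply/subspace_continuousP => x Hx V /= nV.
have [N nN N_f] := f_lc x Hx.
rewrite /within /=; apply: filterS nN => z Nz Hz /=.
rewrite /from_subspace (N_f z Nz Hz); exact: nbhs_singleton nV.
Qed.

End RelativelyClopen.

Lemma escape_depth {T : Type} {H : set T} {K : nat -> set T} :
  {homo K : i j / (i <= j)%N >-> j `<=` i} ->
  (forall x, H x -> exists n, ~ K n x) ->
  exists depth : T -> nat, forall x, H x -> forall n, K n x <-> (n < depth x)%N.
Proof.
move=> K_anti K_escape.
have depth_ex x : exists k, H x -> forall n, K n x <-> (n < k)%N.
  have [Hx|nHx] := pselect (H x); last by exists 0%N => /nHx.
  have [n nKn] := K_escape x Hx.
  have out_ex : exists n, (fun n => ~~ `[< K n x >]) n by exists n; apply/negP => /asboolP.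
  case: (ex_minnP out_ex) => k /negP nKk k_min; exists k => _ m; split=> [Kmx|mk].
    by rewrite ltnNge; apply/negP => /K_anti/(_ x Kmx) Kkx; apply: nKk; exact/asboolP.
  apply: contrapT => nKm.
  by have := k_min m (introN (asboolP _) nKm); rewrite leqNgt mk.
by have [depth depthP] := choice depth_ex; exists depth.
Qed.

Section NestedClopen.
Context {R : realType} {T : topologicalType} {H : set T}.

(* The key construction: a decreasing sequence of relatively clopen sets, all
   meeting H, that every point of H eventually leaves, makes the depth of a
   point a continuous unbounded function on H. *)
Lemma nested_rel_clopen_unbounded (K : nat -> set T) :
  (forall n, rel_clopen H (K n)) -> (forall n, K n.+1 `<=` K n) ->
  (forall n, exists2 x, K n x & H x) -> (forall x, H x -> exists n, ~ K n x) ->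
  ~ pseudocompact_subspace R H.
Proof.
move=> K_clopen K_dec K_meet K_escape.
have K_anti : {homo K : i j / (i <= j)%N >-> j `<=` i}.
  apply: (@homo_leq _ K (fun A B => B `<=` A)) => [A|B A C BA CB|//].
    exact: subset_refl.
  exact: subset_trans CB BA.
have [depth depthP] := escape_depth K_anti K_escape.
have depth_cont : {within H, continuous (fun x => (depth x)%:R : R)}.
  apply: locally_constant_continuous => x Hx.
  have nKx : ~ K (depth x) x by move/(depthP x Hx); rewrite ltnn.
  (* near x, points leave K (depth x): their depth is at most depth x *)
  have [N nN N_out] := (K_clopen (depth x)).2 x Hx nKx.
  (* near x, points stay in K (depth x - 1): their depth is at least depth x *)
  have [M nM M_deep] : exists2 M, nbhs x M &
      forall z, M z -> H z -> (depth x <= depth z)%N.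
    case E: (depth x) => [|k]; first by exists setT => //; exact: filterT.
    have Kkx : K k x by apply/(depthP x Hx); rewrite E.
    have [M nM M_K] := (K_clopen k).1 x Hx Kkx.
    by exists M => // z Mz Hz; apply/(depthP z Hz); exact: M_K.
  exists (N `&` M); first exact: filterI.
  move=> z [Nz Mz] Hz; congr (_%:R); apply/eqP; rewrite eqn_leq M_deep // andbT.
  by rewrite leqNgt; apply/negP => /(depthP z Hz); exact: N_out.
move=> /(_ _ depth_cont)[M M_bound].
have [n nM] : exists n : nat, M < n%:R.
  by exists (Num.truncn `|M|).+1; exact: le_lt_trans (ler_norm M) (truncnS_gt _).
have [y Kny Hy] := K_meet n.
have n_depth : (n < depth y)%N by apply/(depthP y Hy).
have := lt_le_trans nM (le_trans (ltW _) (M_bound y Hy)).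
by rewrite ger0_norm // ltr_nat => /(_ n_depth); rewrite ltxx.
Qed.

Lemma rel_clopen_chain (h : nat -> T) (P : set T -> Prop) :
  P setT ->
  (forall K y, rel_clopen H K -> P K ->
     exists K', [/\ K' `<=` K, rel_clopen H K', P K' & ~ K' y]) ->
  exists K : nat -> set T, [/\ forall n, rel_clopen H (K n) /\ P (K n),
    forall n, K n.+1 `<=` K n & forall n, ~ K n.+1 (h n)].
Proof.
move=> PT shrink.
have shrink_total (Ky : set T * T) : exists K', rel_clopen H Ky.1 -> P Ky.1 ->
    [/\ K' `<=` Ky.1, rel_clopen H K', P K' & ~ K' Ky.2].
  case: Ky => K y; have [[K_clopen PK]|not_inv] := pselect (rel_clopen H K /\ P K).
    by have [K' ?] := shrink K y K_clopen PK; exists K'.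
  by exists K => K_clopen PK; exfalso; apply: not_inv.
have [next nextP] := choice shrink_total.
pose K := fix K n := if n is m.+1 then next (K m, h m) else setT.
have K_inv n : rel_clopen H (K n) /\ P (K n).
  elim: n => [|n [K_clopen PK]]; first by split; [exact: rel_clopenT|].
  by have [] := nextP (K n, h n) K_clopen PK.
exists K; split=> // n; have [K_clopen PK] := K_inv n;
  by have [] := nextP (K n, h n) K_clopen PK.
Qed.

End NestedClopen.

Section CountableSubspace.
Variables (R : realType) (T : topologicalType) (h : nat -> T).

Lemma enumerated_not_pseudocompact (P : set T -> Prop) :
  P setT -> (forall K, P K -> exists2 x, K x & range h x) ->
  (forall K y, rel_clopen (range h) K -> P K ->
     exists K', [/\ K' `<=` K, rel_clopen (range h) K', P K' & ~ K' y]) ->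
  ~ pseudocompact_subspace R (range h).
Proof.
move=> PT P_meet shrink.
have [K [K_inv K_dec K_out]] := rel_clopen_chain h P PT shrink.
apply: (nested_rel_clopen_unbounded K) => //.
- by move=> n; case: (K_inv n).
- by move=> n; case: (K_inv n) => _ /P_meet.
- by move=> _ [n _ <-]; exists n.+1.
Qed.

(* An infinite countable discrete space is not pseudocompact: shrink by
   removing single points, keeping infinitely many points of the subspace. *)
Lemma discrete_enumerated_not_pseudocompact :
  infinite_set (range h) -> (forall x, range h x -> isolated_in (range h) x) ->
  ~ pseudocompact_subspace R (range h).
Proof.
move=> h_infinite h_discrete.
have all_rel_open K : rel_open (range h) K.
  move=> x Hx Kx; have [N nN N_x] := h_discrete x Hx.
  by exists N => // z Nz Hz; rewrite (N_x z Nz Hz).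
apply: (@enumerated_not_pseudocompact (fun K => infinite_set (K `&` range h))) => //.
- by rewrite setTI.
- move=> K K_inf; apply: contrapT => K_empty; apply: K_inf.
  apply: (@sub_finite_set _ _ set0); last exact: finite_set0.
  by move=> x [Kx Hx]; apply: K_empty; exists x.
- move=> K y _ K_inf; exists (K `\` [set y]); split.
  + by move=> x [].
  + by split; apply: all_rel_open.
  + move=> fin; apply: (infinite_setD K_inf (finite_set1 y)).
    by apply: sub_finite_set fin => x [[Kx Hx] nx].
  + by move=> [_]; apply.
Qed.

(* A countable functionally Hausdorff space without isolated points is not
   pseudocompact: cut a relatively clopen set along a level of a function
   separating one of its points from the point to avoid. *)
Lemma perfect_enumerated_not_pseudocompact :
  functionally_hausdorff R T ->
  (forall x, range h x -> ~ isolated_in (range h) x) ->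
  ~ pseudocompact_subspace R (range h).
Proof.
move=> T_fhausdorff h_perfect.
have h_countable : countable (range h) := card_image_le h setT.
apply: (@enumerated_not_pseudocompact (fun K => exists2 x, K x & range h x)) => //.
  by exists (h 0%N) => //; exists 0%N.
move=> K y K_clopen [x Kx Hx].
(* K meets the subspace in a point other than y, since x is not isolated *)
have [a [Ka Ha ay]] : exists a, [/\ K a, range h a & a <> y].
  have [<-|xy] := pselect (x = y); last by exists x.
  apply: contrapT => no_a; apply: (h_perfect x Hx).
  have [N nN N_K] := K_clopen.1 x Hx Kx.
  exists N => // z Nz Hz; apply: contrapT => zx; apply: no_a.
  by exists z; split => //; exact: N_K.
have [g [g_cont gy ga]] := T_fhausdorff a y ay.
have [r [r0 r1 r_notin]] :=
  countable_avoid_unit_interval (sub_countable (card_image_le g (range h)) h_countable).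
exists (K `&` [set z | r < g z]); split.
- by move=> z [].
- exact: rel_clopenI K_clopen (rel_clopen_level g_cont r_notin).
- by exists a => //; split => //=; rewrite ga.
- by move=> [_] /=; rewrite gy ltNge (ltW r0).
Qed.

(* A homogeneous infinite countable functionally Hausdorff space is not
   pseudocompact: it is either discrete or has no isolated point. *)
Lemma homogeneous_enumerated_not_pseudocompact :
  functionally_hausdorff R T -> infinite_set (range h) ->
  (forall x y, range h x -> range h y ->
     isolated_in (range h) x -> isolated_in (range h) y) ->
  ~ pseudocompact_subspace R (range h).
Proof.
move=> T_fhausdorff h_infinite h_homogeneous.
have [[x [Hx x_isolated]]|no_isolated] :=
  pselect (exists x, range h x /\ isolated_in (range h) x).
  apply: discrete_enumerated_not_pseudocompact => // y Hy.
  exact: h_homogeneous x y Hx Hy x_isolated.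
apply: perfect_enumerated_not_pseudocompact => // x Hx x_isolated.
by apply: no_isolated; exists x.
Qed.

End CountableSubspace.

(* A dense subset of an infinite Hausdorff space is infinite: finite sets are
   closed there, and a closed dense set is everything. *)
Lemma dense_infinite {T : topologicalType} (H : set T) :
  hausdorff_space T -> infinite_set [set: T] -> dense H -> infinite_set H.
Proof.
move=> T_hausdorff T_infinite H_dense H_finite.
have H_closed : closed H.
  exact: (proj1 accessible_finite_set_closed (hausdorff_accessible T_hausdorff)).
apply: T_infinite; apply: sub_finite_set H_finite => x _.
apply: contrapT => nHx.
by have [z [nHz Hz]] := H_dense (~` H) (ex_intro _ x nHx) (closed_openC H_closed).
Qed.

Section TopologicalGroupFacts.
Context {T : topologicalType} {mul : T -> T -> T} {inv : T -> T} {e : T}.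
Hypothesis G : is_topological_group mul inv e.

Lemma tg_mulA x y z : mul x (mul y z) = mul (mul x y) z.
Proof. by case: G. Qed.

Lemma tg_mul1g x : mul e x = x.
Proof. by case: G => _ /(_ x) []. Qed.

Lemma tg_mulg1 x : mul x e = x.
Proof. by case: G => _ /(_ x) []. Qed.

Lemma tg_mulVg x : mul (inv x) x = e.
Proof. by case: G => _ _ /(_ x) []. Qed.

Lemma tg_mulgV x : mul x (inv x) = e.
Proof. by case: G => _ _ /(_ x) []. Qed.

Lemma tg_mulgI a b c : mul a b = mul a c -> b = c.
Proof.
by move=> /(congr1 (mul (inv a))); rewrite !tg_mulA tg_mulVg !tg_mul1g.
Qed.

Lemma tg_inv1 : inv e = e.
Proof. by rewrite -{1}(tg_mulg1 (inv e)) tg_mulVg. Qed.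

Lemma tg_invM a b : inv (mul a b) = mul (inv b) (inv a).
Proof.
apply: (@tg_mulgI (mul a b)).
by rewrite tg_mulgV !tg_mulA -(tg_mulA a) tg_mulgV tg_mulg1 tg_mulgV.
Qed.

Lemma tg_invK a : inv (inv a) = a.
Proof. by apply: (@tg_mulgI (inv a)); rewrite tg_mulgV tg_mulVg. Qed.

Lemma tg_lmul_continuous c : continuous (mul c).
Proof.
case: G => _ _ _ cmul _ x.
have pair_cvg : (fun z => (c, z)) @ x --> (c, x) by apply: cvg_pair; [exact: cvg_cst|exact: cvg_id].
exact: (continuous_comp pair_cvg (cmul (c, x))).
Qed.

Lemma tg_mul_nbhs1 {U : set T} : nbhs e U ->
  exists2 V, nbhs e V & forall a b, V a -> V b -> U (mul a b).
Proof.
move=> nU; case: G => _ _ _ cmul _.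
have nUee : nbhs (mul (e, e).1 (e, e).2) U by rewrite /= tg_mul1g.
have [[A B] /= [nA nB] AB_U] := cmul (e, e) _ nUee.
exists (A `&` B); first exact: filterI.
by move=> a b [Aa _] [_ Bb]; exact: (AB_U (a, b)).
Qed.

Definition left_entourage : set_system (T * T) :=
  [set E | exists2 U, nbhs e U & [set xy | U (mul (inv xy.1) xy.2)] `<=` E].

Lemma left_entourage_filter : Filter left_entourage.
Proof.
constructor.
- by exists setT; [exact: filterT|].
- move=> P Q [U nU UP] [V nV VQ]; exists (U `&` V); first exact: filterI.
  by move=> xy [Ux Vx]; split; [exact: UP|exact: VQ].
- by move=> P Q PQ [U nU UP]; exists U => // xy /UP /PQ.
Qed.

Lemma left_entourage_diag A : left_entourage A -> diagonal `<=` A.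
Proof.
case=> U nU UA [x y]; rewrite /diagonal /= => <-; apply: UA => /=.
by rewrite tg_mulVg; exact: nbhs_singleton.
Qed.

Lemma left_entourage_inv A : left_entourage A ->
  left_entourage [set xy | A (xy.2, xy.1)].
Proof.
case=> U nU UA; case: G => _ _ _ _ cinv.
exists (inv @^-1` U); first by apply: cinv; rewrite tg_inv1.
by move=> [x y] /= Uxy; apply: UA => /=; rewrite tg_invM tg_invK in Uxy.
Qed.

Lemma left_entourage_split A : left_entourage A ->
  exists2 B, left_entourage B &
    [set xy | exists2 z, B (xy.1, z) & B (z, xy.2)] `<=` A.
Proof.
case=> U nU UA; have [V nV VVU] := tg_mul_nbhs1 nU.
exists [set xy | V (mul (inv xy.1) xy.2)]; first by exists V.
move=> [x z] /= [y /= Vxy Vyz]; apply: UA => /=.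
by have := VVU _ _ Vxy Vyz; rewrite -tg_mulA (tg_mulA y) tg_mulgV tg_mul1g.
Qed.

Lemma left_entourage_nbhsE : @nbhs T T = nbhs_ left_entourage.
Proof.
apply/funext => x; apply/funext => P; apply/propext; split.
- move=> nP; have nU : nbhs e (mul x @^-1` P).
    have xe_cvg : mul x @ e --> mul x e := tg_lmul_continuous x e.
    by rewrite tg_mulg1 in xe_cvg; apply: xe_cvg.
  exists [set xy | (mul x @^-1` P) (mul (inv xy.1) xy.2)]; first by exists (mul x @^-1` P).
  by move=> y; rewrite /xsection /= inE /= tg_mulA tg_mulgV tg_mul1g.
- case=> E [U nU UE] EP; apply: (filterS EP).
  apply: (filterS (P := [set y | U (mul (inv x) y)])).
    by move=> y Uy; rewrite /xsection /= inE; exact: (UE (x, y)).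
  have xx_cvg : mul (inv x) @ x --> mul (inv x) x := tg_lmul_continuous (inv x) x.
  by rewrite tg_mulVg in xx_cvg; apply: xx_cvg.
Qed.

Definition word_letter (d : nat -> T) (bn : bool * nat) : T :=
  if bn.1 then d bn.2 else inv (d bn.2).

Definition eval_word (d : nat -> T) (w : seq (bool * nat)) : T :=
  foldr (fun bn acc => mul (word_letter d bn) acc) e w.

Definition inv_word (w : seq (bool * nat)) : seq (bool * nat) :=
  rev (map (fun bn => (~~ bn.1, bn.2)) w).

Lemma eval_word_cat d w1 w2 :
  eval_word d (w1 ++ w2) = mul (eval_word d w1) (eval_word d w2).
Proof.
elim: w1 => [|a w IH] /=; first by rewrite tg_mul1g.
by rewrite IH tg_mulA.
Qed.

Lemma eval_word_inv d w : eval_word d (inv_word w) = inv (eval_word d w).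
Proof.
elim: w => [|a w IH] /=; first by rewrite tg_inv1.
rewrite /inv_word /= rev_cons -cats1 eval_word_cat -/(inv_word w) IH /=.
rewrite tg_mulg1 tg_invM; congr (mul _ _).
by rewrite /word_letter /=; case: a.1 => //=; rewrite tg_invK.
Qed.

(* The subgroup generated by a countable set is countable: it is enumerated
   by evaluating the (countably many) words over an enumeration of the set. *)
Lemma countable_generated_subgroup {D : set T} : countable D ->
  exists h : nat -> T, is_subgroup mul inv e (range h) /\ D `<=` range h.
Proof.
move=> /countable_injP[f f_inj].
pose d : nat -> T := 'pinv_(fun=> e) D f.
pose word n : seq (bool * nat) := odflt [::] (unpickle n).
pose h n := eval_word d (word n).
have h_pickle w : h (pickle w) = eval_word d w by rewrite /h /word pickleK.
exists h; split; first split.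
- by exists (pickle ([::] : seq (bool * nat))) => //; rewrite h_pickle.
- move=> _ _ [n _ <-] [m _ <-].
  by exists (pickle (word n ++ word m)); rewrite // h_pickle eval_word_cat.
- move=> _ [n _ <-]; exists (pickle (inv_word (word n))) => //.
  by rewrite h_pickle eval_word_inv.
- move=> x Dx; exists (pickle [:: (true, f x)]) => //.
  by rewrite h_pickle /= /word_letter /= tg_mulg1 /d pinvKV // inE.
Qed.

(* Subgroups are homogeneous: the translation by x y^-1, a homeomorphism
   preserving H, carries y to x, so y is isolated in H when x is. *)
Lemma subgroup_isolated_homogeneous {H : set T} : is_subgroup mul inv e H ->
  forall x y, H x -> H y -> isolated_in H x -> isolated_in H y.
Proof.
move=> [_ H_mul H_inv] x y Hx Hy [N nN N_x].
pose c := mul x (inv y).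
have cy : mul c y = x by rewrite /c -tg_mulA tg_mulVg tg_mulg1.
exists (mul c @^-1` N).
  have cy_cvg : mul c @ y --> mul c y := tg_lmul_continuous c y.
  by apply: cy_cvg; rewrite cy.
move=> z Nz Hz; apply: (@tg_mulgI c); rewrite cy.
by apply: N_x => //; apply: (H_mul) => //; apply: H_mul => //; exact: H_inv.
Qed.

End TopologicalGroupFacts.

(* The group with its left uniformity; as a topological space it is T. *)
Definition left_uniform_group {T : topologicalType} {mul : T -> T -> T} {inv : T -> T}
  {e : T} (G : is_topological_group mul inv e) : Type := T.

HB.instance Definition _ {T : topologicalType} {mul : T -> T -> T} {inv : T -> T}
  {e : T} (G : is_topological_group mul inv e) :=
  Topological.copy (left_uniform_group G) T.

HB.instance Definition _ {T : topologicalType} {mul : T -> T -> T} {inv : T -> T}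
  {e : T} (G : is_topological_group mul inv e) :=
  @Nbhs_isUniform_mixin.Build (left_uniform_group G) (@left_entourage T mul inv e)
    (@left_entourage_filter T mul inv e) (left_entourage_diag G) (left_entourage_inv G)
    (left_entourage_split G) (left_entourage_nbhsE G).

(* A Hausdorff topological group is functionally Hausdorff: uniform spaces are
   completely regular, and points are closed. *)
Lemma tg_functionally_hausdorff (R : realType) {T : topologicalType}
    {mul : T -> T -> T} {inv : T -> T} {e : T} :
  is_topological_group mul inv e -> hausdorff_space T -> functionally_hausdorff R T.
Proof.
move=> G T_hausdorff a y ay.
have a_closed : closed ([set a] : set (left_uniform_group G)).
  exact: accessible_closed_set1 (hausdorff_accessible T_hausdorff) a.
have /(@uniform_separatorP _ R)[g [g_cont _ g0 g1]] :=
  @uniform_completely_regular R (left_uniform_group G) y [set a] a_closed (nesym ay).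
by exists g; split; [exact: g_cont | apply: g0; exists y | apply: g1; exists a].
Qed.

Theorem mainTheorem6 (R : realType) (T : topologicalType)
  (mul : T -> T -> T) (inv : T -> T) (e : T) :
  is_topological_group mul inv e ->
  hausdorff_space T ->
  separable_space T ->
  infinite_set [set: T] ->
  ~ dense_subgroup_pseudocompact R mul inv e /\
  (exists H : set T, [/\ is_subgroup mul inv e H, dense H &
                         ~ pseudocompact_subspace R H]).
Proof.
move=> G T_hausdorff [D [D_countable D_dense]] T_infinite.
have [h [h_subgroup D_h]] := countable_generated_subgroup G D_countable.
have h_dense : dense (range h).
  move=> O O0 O_open; have [x [Ox Dx]] := D_dense O O0 O_open.
  by exists x; split => //; exact: D_h.
have h_not_pc : ~ pseudocompact_subspace R (range h).
  apply: homogeneous_enumerated_not_pseudocompact.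
  - exact: tg_functionally_hausdorff G T_hausdorff.
  - exact: dense_infinite.
  - exact (subgroup_isolated_homogeneous G h_subgroup).
by split; [move=> /(_ _ h_subgroup h_dense) | exists (range h)].
Qed.
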